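(* Let $U\trianglelefteq S\le W$ and $R=(U\times U)\langle\sigma\rangle\{(s,s):s\in S\}$. Then \[N_W(R)=(V\times V)\langle\sigma\rangle\{(t,t):t\in T\},\] where $V=\Omega(S,U)$ and $T=N_W(U)\cap N_W(S)$. Furthermore $V$ is a normal subgroup of $T$, $[V\times V,R]\le(U\times U)\{(v,v):v\in V\}$, the quotient $V/U$ is a $T/S$-module, and $N_W(R)/R\cong(V/U)(T/S)$.
   Context: $W$ is the isometry group of the binary rooted tree $\{0,1\}^*$. Elements are written $(g_0,g_1)\pi$ with $\pi\in\mathrm{Sym}(\{0,1\})$, meaning $(xw)\mapsto x^\pi w^{g_x}$; $\sigma$ is the isometry swapping the two subtrees at the root rigidly; $U\times U=\{(u,u'):u,u'\in U\}$. For groups $K\trianglelefteq G$, $\Omega(G,K)=\{v\in G: v^2\in K\text{ and }[G,v]\le K\}$. The notation $(V/U)(T/S)$ denotes a product of (a group isomorphic to) $V/U$ with (a group isomorphic to) $T/S$, as in the paper. *)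

From mathcomp Require Import all_boot.
Set Implicit Arguments. Unset Strict Implicit. Unset Printing Implicit Defensive.

(* ---------- The group W of isometries of the binary rooted tree ----------
   An isometry g of {0,1}^* (rooted, so it fixes the root) is encoded by its
   portrait: for every vertex v, the bit g v tells whether g swaps the two
   children of v.  Vertices are words in seq bool (false = 0, true = 1).
   The action of g on vertices ([act g]) realises the recursion
   (g_0,g_1)pi : x w |-> x^pi w^(g_x), with pi = swap iff g [::] and
   g_x = sect g x.  This correspondence portrait <-> isometry is a bijection;
   equality of elements of W is (extensional) equality of portraits. *)
Definition W := seq bool -> bool.

Definition sect (g : W) (x : bool) : W := fun v => g (x :: v).

Fixpoint act (g : W) (w : seq bool) : seq bool :=
  match w with
  | [::] => [::]
  | x :: w' => (x (+) g [::]) :: act (sect g x) w'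
  end.

(* Right actions: w^(g*h) = (w^g)^h, i.e. act (mul g h) = act h \o act g. *)
Definition mul (g h : W) : W := fun v => g v (+) h (act g v).

Fixpoint inv_at (g : W) (v : seq bool) : bool :=
  match v with
  | [::] => g [::]
  | x :: v' => inv_at (sect g (x (+) g [::])) v'
  end.
Definition inv (g : W) : W := inv_at g.

Definition one : W := fun _ => false.

(* sigma: swaps the two subtrees at the root rigidly. *)
Definition sigma : W := fun v => if v is [::] then true else false.

(* (g0, g1) : acts as g0 on the subtree 0{0,1}^* and g1 on 1{0,1}^*. *)
Definition pairW (g0 g1 : W) : W :=
  fun v => match v with
           | [::] => false
           | x :: v' => if x then g1 v' else g0 v'
           end.

Definition wset := W -> Prop.

Definition subset (A B : wset) : Prop := forall g, A g -> B g.
Definition seteq (A B : wset) : Prop := forall g, A g <-> B g.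
Definition setI (A B : wset) : wset := fun g => A g /\ B g.

Definition subgroup (H : wset) : Prop :=
  H one /\ (forall x y, H x -> H y -> H (mul x y)) /\ (forall x, H x -> H (inv x)).

Definition conj (x g : W) : W := mul (mul (inv g) x) g.

Definition normalizer (H : wset) : wset := fun g => forall x, H x <-> H (conj x g).

Definition normal (K H : wset) : Prop :=
  subgroup K /\ subgroup H /\ subset K H /\ subset H (normalizer K).

Definition gen (X : wset) : wset :=
  fun g => forall K, subgroup K -> subset X K -> K g.

Definition comm (x y : W) : W := mul (mul (inv x) (inv y)) (mul x y).

Definition commg (A B : wset) : wset :=
  gen (fun g => exists a b, A a /\ B b /\ g = comm a b).

Definition Omega (G K : wset) : wset :=
  fun v => G v /\ K (mul v v) /\ subset (commg G (fun w => w = v)) K.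

Definition prodset (A B : wset) : wset :=
  fun g => exists a b, A a /\ B b /\ g = mul a b.

Definition dprodW (U U' : wset) : wset :=
  fun g => exists u u', U u /\ U' u' /\ g = pairW u u'.

Definition diagW (S : wset) : wset := fun g => exists s, S s /\ g = pairW s s.

Definition sigma_grp : wset := gen (fun g => g = sigma).

(* H/K ~= H'/K' (K normal in H, K' normal in H'): a map f : H -> H' inducing
   an isomorphism of the quotient groups, i.e. f is a homomorphism modulo K',
   its kernel modulo K' is exactly K, and it is onto modulo K'. *)
Definition quot_iso (H K H' K' : wset) : Prop :=
  normal K H /\ normal K' H' /\
  exists f : W -> W,
    (forall x, H x -> H' (f x)) /\
    (forall x y, H x -> H y -> K' (mul (f (mul x y)) (inv (mul (f x) (f y))))) /\
    (forall x, H x -> (K' (f x) <-> K x)) /\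
    (forall y, H' y -> exists x, H x /\ K' (mul (f x) (inv y))).

(* V/U is a T/S-module (via conjugation): U, S normal in T, U normal in V,
   V normal in T (so T acts on V/U), V/U abelian, and S acts trivially on
   V/U (so the action factors through T/S). *)
Definition quot_module (V U T S : wset) : Prop :=
  normal U V /\ normal V T /\ subset T (normalizer U) /\ normal S T /\
  subset (commg V V) U /\ subset (commg S V) U.

From mathcomp Require Import all_boot.
From Stdlib Require Import FunctionalExtensionality PropExtensionality.
Set Implicit Arguments. Unset Strict Implicit. Unset Printing Implicit Defensive.

(* Write g in W as (g0,g1)sigma^e.  For subgroups A <= B with B normalizing A,
   the set (A x A)<sigma>{(b,b) : b in B} consists exactly of the g whose two
   sections g0, g1 lie in B and agree modulo A; R is this set for (S,U).
   Conjugating (x,1), (s,s) and sigma by (a,b) shows that (a,b) normalizes R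
   iff a and b normalize U and S and a b^-1 lies in V = Omega(S,U); as sigma is
   in R, N_W(R) is the set for (T,V), i.e. (V x V)<sigma>{(t,t) : t in T}.
   It is the product of the sets A for (S,V) and B for (T,U), and x |-> (x,1),
   x |-> (x,x) induce V/U ~= A/R and T/S ~= B/R. *)

(** * The group W *)

Local Notation "x ** y" := (mul x y) (at level 40, left associativity).

Lemma sect_mul g h x : sect (g ** h) x = sect g x ** sect h (x (+) g [::]).
Proof. exact: functional_extensionality. Qed.

Lemma sect_inv g x : sect (inv g) x = inv (sect g (x (+) g [::])).
Proof. by []. Qed.

Lemma act_mul g h w : act (g ** h) w = act h (act g w).
Proof. by elim: w g h => [|x w IH] g h //=; rewrite sect_mul IH addbA. Qed.

Lemma mulgA f g h : f ** (g ** h) = f ** g ** h.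
Proof. by apply: functional_extensionality => v; rewrite /mul act_mul addbA. Qed.

Lemma act_one w : act one w = w.
Proof. by elim: w => //= x w ->; rewrite addbF. Qed.

Lemma mul1g g : one ** g = g.
Proof. by apply: functional_extensionality => v; rewrite /mul act_one. Qed.

Lemma mulg1 g : g ** one = g.
Proof. by apply: functional_extensionality => v; rewrite /mul addbF. Qed.

Lemma inv_act g v : inv g (act g v) = g v.
Proof. by elim: v g => [|x v IH] g //=; rewrite addbK; apply: IH. Qed.

Lemma act_inv g v : g (act (inv g) v) = inv g v.
Proof. by elim: v g => [|x v IH] g //=; apply: (IH (sect g (x (+) g [::]))). Qed.

Lemma mulgV g : g ** inv g = one.
Proof. by apply: functional_extensionality => v; rewrite /mul inv_act addbb. Qed.

Lemma mulVg g : inv g ** g = one.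
Proof. by apply: functional_extensionality => v; rewrite /mul act_inv addbb. Qed.

Lemma mulKVg x y : x ** (inv x ** y) = y.
Proof. by rewrite mulgA mulgV mul1g. Qed.

Lemma mulKg x y : inv x ** (x ** y) = y.
Proof. by rewrite mulgA mulVg mul1g. Qed.

Lemma invg_unique x y : x ** y = one -> inv x = y.
Proof. by move=> xy1; rewrite -[inv x]mulg1 -xy1 mulKg. Qed.

Lemma invgK x : inv (inv x) = x.
Proof. by apply: invg_unique; rewrite mulVg. Qed.

Lemma invMg x y : inv (x ** y) = inv y ** inv x.
Proof. by apply: invg_unique; rewrite -mulgA mulKVg mulgV. Qed.

Lemma invg1 : inv one = one.
Proof. by apply: invg_unique; rewrite mulg1. Qed.

Ltac gsimpl := rewrite /conj /comm;
  repeat first [ rewrite invMg | rewrite invgK | rewrite invg1 | rewrite -mulgA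
               | rewrite mulKVg | rewrite mulKg | rewrite mulgV | rewrite mulVg
               | rewrite mul1g | rewrite mulg1 ].

Definition sigma_pow (e : bool) : W := if e then sigma else one.

Lemma sect_pairW a b x : sect (pairW a b) x = if x then b else a.
Proof. by case: x. Qed.

Lemma pairW_mul a b c d : pairW a b ** pairW c d = pairW (a ** c) (b ** d).
Proof.
by apply: functional_extensionality => -[|x v] //=; rewrite /mul /= addbF; case: x.
Qed.

Lemma pairW11 : pairW one one = one.
Proof. by apply: functional_extensionality => -[|[] v]. Qed.

Lemma pairW_inv a b : inv (pairW a b) = pairW (inv a) (inv b).
Proof. by apply: invg_unique; rewrite pairW_mul !mulgV pairW11. Qed.

Lemma sigma_powK e : sigma_pow e ** sigma_pow e = one.
Proof. by case: e; rewrite /= ?mulg1 //; apply: functional_extensionality => -[]. Qed.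

Lemma sigma_pow_inv e : inv (sigma_pow e) = sigma_pow e.
Proof. exact: invg_unique (sigma_powK e). Qed.

Lemma sigma_pow_pairW e a b :
  sigma_pow e ** pairW a b = pairW (if e then b else a) (if e then a else b) ** sigma_pow e.
Proof.
case: e => /=; last by rewrite mul1g mulg1.
apply: functional_extensionality => -[|x v] //=; rewrite /mul /= act_one.
by case: x; rewrite /= addbF.
Qed.

Lemma portrait_decomp g : g = pairW (sect g false) (sect g true) ** sigma_pow (g [::]).
Proof.
apply: functional_extensionality => -[|x v]; rewrite /mul /=.
  by case: (g [::]).
by case: (g [::]); case: x; rewrite /= addbF.
Qed.

Lemma sect_pairW_sigma a b e x : sect (pairW a b ** sigma_pow e) x = if x then b else a.
Proof. by rewrite sect_mul sect_pairW; case: e; rewrite /= mulg1. Qed.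

Lemma wset_ext (A B : wset) : seteq A B -> A = B.
Proof.
by move=> AB; apply: functional_extensionality => g; apply: propositional_extensionality.
Qed.

Section Subgroups.

Variable H : wset.
Hypothesis sgH : subgroup H.

Lemma group1 : H one. Proof. by case: sgH. Qed.

Lemma groupM x y : H x -> H y -> H (x ** y).
Proof. by case: sgH => _ [mulH _]; apply: mulH. Qed.

Lemma groupV x : H x -> H (inv x).
Proof. by case: sgH => _ [_ invH]; apply: invH. Qed.

Lemma normG : subset H (normalizer H).
Proof.
have HJ x g : H x -> H g -> H (conj x g).
  by move=> Hx Hg; apply: groupM => //; apply: groupM => //; apply: groupV.
move=> g Hg x; split=> [Hx | Hxg]; first exact: HJ.
have -> : x = conj (conj x g) (inv g) by gsimpl.
by apply: HJ => //; apply: groupV.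
Qed.

End Subgroups.

Lemma subgroupI A B : subgroup A -> subgroup B -> subgroup (setI A B).
Proof.
move=> sgA sgB; split; first by split; apply: group1.
by split=> [x y [Ax Bx] [Ay By] | x [Ax Bx]]; split; by [apply: groupM | apply: groupV].
Qed.

Lemma normJ H g x : normalizer H g -> H x -> H (conj x g).
Proof. by move=> nHg /nHg. Qed.

Lemma normJV H g x : normalizer H g -> H x -> H (conj x (inv g)).
Proof.
move=> nHg Hx; apply/nHg.
by have -> : conj (conj x (inv g)) g = x by gsimpl.
Qed.

Lemma normalizer_of_conj H g :
  (forall x, H x -> H (conj x g)) -> (forall x, H x -> H (conj x (inv g))) ->
  normalizer H g.
Proof.
move=> Hg HgV x; split=> [/Hg // | /HgV].
by have -> : conj (conj x g) (inv g) = x by gsimpl.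
Qed.

Lemma normV H g : normalizer H g -> normalizer H (inv g).
Proof.
by move=> nHg; apply: normalizer_of_conj; rewrite ?invgK => x; [apply: normJV | apply: normJ].
Qed.

Lemma normM H g h : normalizer H g -> normalizer H h -> normalizer H (g ** h).
Proof.
move=> nHg nHh x.
have -> : conj x (g ** h) = conj (conj x g) h by gsimpl.
by rewrite -nHh -nHg.
Qed.

Lemma normalizer_subgroup H : subgroup (normalizer H).
Proof.
split; first by move=> x; have -> : conj x one = x by gsimpl.
by split=> [x y|x]; [apply: normM | apply: normV].
Qed.

Lemma mem_gen X g : X g -> gen X g.
Proof. by move=> Xg K _; apply. Qed.

Lemma gen_subset X K : subgroup K -> subset X K -> subset (gen X) K.
Proof. by move=> sgK sXK g; apply. Qed.

Lemma sigma_grpP g : sigma_grp g <-> exists e, g = sigma_pow e.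
Proof.
split=> [sg | [e ->]].
  apply: (sg (fun g => exists e, g = sigma_pow e)); last by move=> x ->; exists true.
  split; first by exists false.
  split=> [x y [e ->] [f ->] | x [e ->]].
    exists (e (+) f); case: e; case: f; rewrite /= ?mulg1 ?mul1g //.
    exact: (sigma_powK true).
  by exists e; rewrite sigma_pow_inv.
case: e; first exact: mem_gen.
by move=> K sgK _; apply: group1.
Qed.

Lemma sigma_pow_diag e b : sigma_pow e ** pairW b b = pairW b b ** sigma_pow e.
Proof. by rewrite sigma_pow_pairW; case: e. Qed.

Lemma pairW_decompl a b e :
  pairW a b ** sigma_pow e = pairW (a ** inv b) one ** (pairW b b ** sigma_pow e).
Proof. by rewrite mulgA pairW_mul; gsimpl. Qed.

Lemma pairW_decompd a b e :
  pairW a b ** sigma_pow e = pairW b b ** (pairW (inv b ** a) one ** sigma_pow e).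
Proof. by rewrite mulgA pairW_mul; gsimpl. Qed.

Lemma conj1g g : conj one g = one.
Proof. by gsimpl. Qed.

Lemma conj_pairW x y a b : conj (pairW x y) (pairW a b) = pairW (conj x a) (conj y b).
Proof. by rewrite /conj pairW_inv !pairW_mul. Qed.

Lemma conj_pairW_sigma r0 r1 a b :
  conj (pairW r0 r1 ** sigma_pow true) (pairW a b) =
  pairW (inv a ** r0 ** b) (inv b ** r1 ** a) ** sigma_pow true.
Proof. by rewrite /conj pairW_inv -!mulgA sigma_pow_pairW !mulgA !pairW_mul. Qed.

Lemma conj_sigma_pairW a b : conj (pairW a b) (sigma_pow true) = pairW b a.
Proof.
by rewrite /conj sigma_pow_inv sigma_pow_pairW -mulgA sigma_powK mulg1.
Qed.

Lemma comm_pairW v v' r0 r1 :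
  comm (pairW v v') (pairW r0 r1) = pairW (comm v r0) (comm v' r1).
Proof. by rewrite /comm !pairW_inv !pairW_mul. Qed.

Lemma comm_pairW_sigma v v' r0 r1 :
  comm (pairW v v') (pairW r0 r1 ** sigma_pow true) =
  pairW (inv v ** conj v' r1) (inv v' ** conj v r0).
Proof.
rewrite /comm invMg !pairW_inv sigma_pow_inv -!mulgA.
rewrite (mulgA (pairW (inv r0) _)) pairW_mul (mulgA (pairW _ _) (pairW r0 r1)) pairW_mul.
rewrite (mulgA (sigma_pow true)) sigma_pow_pairW -mulgA sigma_powK mulg1.
by rewrite pairW_mul /=; gsimpl.
Qed.

(** * Elements whose sections agree modulo a subgroup *)

Definition sect_congr (B A : wset) : wset := fun g =>
  B (sect g false) /\ B (sect g true) /\ A (sect g false ** inv (sect g true)).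

Lemma sect_congrP B A a b e :
  sect_congr B A (pairW a b ** sigma_pow e) <-> B a /\ B b /\ A (a ** inv b).
Proof. by rewrite /sect_congr !sect_pairW_sigma. Qed.

Lemma sect_congr_pairW B A a b :
  sect_congr B A (pairW a b) <-> B a /\ B b /\ A (a ** inv b).
Proof. by rewrite /sect_congr !sect_pairW. Qed.

Lemma sect_congrS B A B' A' :
  subset B B' -> subset A A' -> subset (sect_congr B A) (sect_congr B' A').
Proof. by move=> sBB' sAA' g [Bg0 [Bg1 Ag]]; split; [|split]; auto. Qed.

Local Notation PS A B := (prodset (prodset (dprodW A A) sigma_grp) (diagW B)).

Section SectCongr.

Variables B A : wset.
Hypotheses (sgB : subgroup B) (sgA : subgroup A).
Hypotheses (sAB : subset A B) (nAB : subset B (normalizer A)).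

Lemma sect_congr_subgroup : subgroup (sect_congr B A).
Proof.
split; first by split; [|split]; rewrite /= ?invg1 ?mulg1; apply: group1.
split=> [g h [Bg0 [Bg1 Ag]] [Bh0 [Bh1 Ah]] | g [Bg0 [Bg1 Ag]]].
  rewrite /sect_congr !sect_mul.
  case: (g [::]) => /=; (split; [|split]; try by apply: groupM).
    have -> : sect g false ** sect h true ** inv (sect g true ** sect h false) =
      (sect g false ** inv (sect g true)) **
      conj (inv (sect h false ** inv (sect h true))) (inv (sect g true)) by gsimpl.
    by apply: groupM => //; apply: normJV; [apply: nAB | apply: groupV].
  have -> : sect g false ** sect h false ** inv (sect g true ** sect h true) =
    (sect g false ** inv (sect g true)) **
    conj (sect h false ** inv (sect h true)) (inv (sect g true)) by gsimpl.
  by apply: groupM => //; apply: normJV => //; apply: nAB.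
rewrite /sect_congr !sect_inv; case: (g [::]) => /=; (split; [|split]; try by apply: groupV).
  have -> : inv (sect g true) ** inv (inv (sect g false)) =
    conj (sect g false ** inv (sect g true)) (sect g true) by gsimpl.
  exact: normJ (nAB Bg1) Ag.
have -> : inv (sect g false) ** inv (inv (sect g true)) =
  conj (inv (sect g false ** inv (sect g true))) (sect g false) by gsimpl.
by apply: normJ; [apply: nAB | apply: groupV].
Qed.

Lemma sect_congr_sigma_pow e : sect_congr B A (sigma_pow e).
Proof.
rewrite -[sigma_pow e]mul1g -pairW11 sect_congrP invg1 mulg1.
by split; [|split]; apply: group1.
Qed.

Lemma sect_congr_diag b : B b -> sect_congr B A (pairW b b).
Proof. by move=> Bb; rewrite sect_congr_pairW mulgV; split; [|split] => //; apply: group1. Qed.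

Lemma sect_congr_pairWl x : sect_congr B A (pairW x one) <-> A x.
Proof.
rewrite sect_congr_pairW invg1 mulg1.
by split=> [[_ []] // | Ax]; split; [apply: sAB | split; first apply: group1].
Qed.

Lemma PS_sect_congr : PS A B = sect_congr B A.
Proof.
apply: wset_ext => g; split.
  case=> _ [_ [[_ [_ [[a [a' [Aa [Aa' ->]]]] [/sigma_grpP [e ->] ->]]]] [[b [Bb ->]] ->]]].
  have sgC := sect_congr_subgroup.
  apply: (groupM sgC); last exact: sect_congr_diag.
  apply: (groupM sgC); last exact: sect_congr_sigma_pow.
  rewrite sect_congr_pairW; split; [|split]; auto.
  by apply: groupM => //; apply: groupV.
case=> Bg0 [Bg1 Ag].
rewrite [g]portrait_decomp pairW_decompl -sigma_pow_diag mulgA.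
set a := _ ** inv _; set b := sect g true.
exists (pairW a one ** sigma_pow (g [::])), (pairW b b); split.
  exists (pairW a one), (sigma_pow (g [::])); split.
    by exists a, one; split; [|split] => //; apply: group1.
  by split => //; apply/sigma_grpP; exists (g [::]).
by split=> //; exists b.
Qed.

End SectCongr.

Lemma quot_iso_of_morph H K H' K' (f : W -> W) : normal K H -> normal K' H' ->
  (forall x, H x -> H' (f x)) ->
  (forall x y, f (x ** y) = f x ** f y) ->
  (forall x, H x -> (K' (f x) <-> K x)) ->
  (forall y, H' y -> exists x r, H x /\ K' r /\ y = f x ** r) ->
  quot_iso H K H' K'.
Proof.
move=> nsKH nsKH' fH fM fK fonto; split=> //; split=> //; exists f.
have [sgK' [_ [_ nK'H']]] := nsKH'.
split=> //; split; first by move=> x y _ _; rewrite fM mulgV; apply: group1.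
split=> // y /fonto [x [r [Hx [K'r ->]]]].
exists x; split=> //.
have -> : f x ** inv (f x ** r) = conj (inv r) (inv (f x)) by gsimpl.
by apply: normJV; [apply/nK'H'/fH | apply: groupV].
Qed.

(** * Omega(S,U) and the normalizer of R *)

Section NormalizerR.

Variables U S : wset.
Hypothesis nsUS : normal U S.

Local Notation V := (Omega S U).
Local Notation T := (setI (normalizer U) (normalizer S)).
Local Notation R := (sect_congr S U).
Local Notation N := (sect_congr T V).

Let sgU : subgroup U. Proof. by case: nsUS. Qed.
Let sgS : subgroup S. Proof. by case: nsUS => _ []. Qed.
Let sUS : subset U S. Proof. by case: nsUS => _ [_ []]. Qed.
Let nUS : subset S (normalizer U). Proof. by case: nsUS => _ [_ []]. Qed.

Lemma OmegaP v : V v <-> S v /\ U (v ** v) /\ forall s, S s -> U (comm s v).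
Proof.
split=> [[Sv [Uvv cSv]] | [Sv [Uvv cSv]]].
  by split=> //; split=> // s Ss; apply: cSv; apply: mem_gen; exists s, v.
split=> //; split=> //.
by apply: gen_subset => // g [s [_ [Ss [-> ->]]]]; apply: cSv.
Qed.

Lemma Omega_sub_S : subset V S.
Proof. by move=> v []. Qed.

Lemma comm_Omega_S v s : V v -> S s -> U (comm v s).
Proof.
move=> /OmegaP [_ [_ cSv]] Ss.
have -> : comm v s = inv (comm s v) by gsimpl.
by apply: groupV => //; apply: cSv.
Qed.

Lemma U_sub_Omega : subset U V.
Proof.
move=> u Uu; apply/OmegaP; split; first exact: sUS.
split=> [|s Ss]; first exact: groupM.
have -> : comm s u = conj (inv u) s ** u by gsimpl.
by apply: groupM => //; apply: normJ; [apply: nUS | apply: groupV].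
Qed.

Lemma Omega_subgroup : subgroup V.
Proof.
split; first exact: U_sub_Omega (group1 sgU).
split=> [v w /OmegaP [Sv [Uvv cSv]] /OmegaP [Sw [Uww cSw]] | v /OmegaP [Sv [Uvv cSv]]].
  apply/OmegaP; split; first exact: groupM.
  split=> [|s Ss].
    have -> : v ** w ** (v ** w) = v ** v ** (conj (comm w v) (inv w) ** (w ** w)) by gsimpl.
    by do 2!apply: groupM => //; apply: normJV; [apply: nUS | apply: cSv].
  have -> : comm s (v ** w) = comm s w ** conj (comm s v) w by gsimpl.
  by apply: (groupM sgU); [apply: cSw | apply: normJ; [apply: nUS | apply: cSv]].
apply/OmegaP; split; first exact: groupV.
split=> [|s Ss]; first by rewrite -invMg; apply: groupV.
have -> : comm s (inv v) = conj (inv (comm s v)) (inv v) by gsimpl.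
by apply: normJV; [apply: nUS | apply: (groupV sgU); apply: cSv].
Qed.

Let sgV : subgroup V := Omega_subgroup.

Lemma T_subgroup : subgroup T.
Proof. exact: subgroupI (normalizer_subgroup U) (normalizer_subgroup S). Qed.

Let sgT : subgroup T := T_subgroup.

Lemma S_sub_T : subset S T.
Proof. by move=> s Ss; split; [apply: nUS | apply: normG]. Qed.

Lemma Omega_conj t x : T t -> V x -> V (conj x t).
Proof.
move=> [nUt nSt] /OmegaP [Sx [Uxx cSx]]; apply/OmegaP.
split; first exact: normJ.
split=> [|s Ss].
  have -> : conj x t ** conj x t = conj (x ** x) t by gsimpl.
  exact: normJ.
have -> : comm s (conj x t) = conj (comm (conj s (inv t)) x) t by gsimpl.
by apply: normJ => //; apply: cSx; apply: normJV.
Qed.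

Lemma Omega_normal_T : normal V T.
Proof.
split; first exact: Omega_subgroup.
split; first exact: T_subgroup.
split=> [v /Omega_sub_S /S_sub_T // | t Tt].
apply: normalizer_of_conj => x; first exact: Omega_conj.
by apply: Omega_conj; apply: (groupV sgT).
Qed.

Let nVT : subset T (normalizer V). Proof. by case: Omega_normal_T => _ [_ []]. Qed.
Let nUV : subset V (normalizer U). Proof. by move=> v /Omega_sub_S /nUS. Qed.

Lemma U_normal_Omega : normal U V.
Proof.
split=> //; split; first exact: Omega_subgroup.
by split; [apply: U_sub_Omega | apply: nUV].
Qed.

Lemma S_normal_T : normal S T.
Proof. by split=> //; split; [apply: T_subgroup | split; [apply: S_sub_T | move=> t []]]. Qed.

Lemma Omega_quot_module : quot_module V U T S.
Proof.
split; first exact: U_normal_Omega.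
split; first exact: Omega_normal_T.
split; first by move=> t [].
split; first exact: S_normal_T.
split; apply: gen_subset => // g [a [v [Va [Vv ->]]]].
  by apply: comm_Omega_S => //; apply: Omega_sub_S.
by have [_ [_ cSv]] := iffLR (OmegaP v) Vv; apply: cSv.
Qed.

Let sgR : subgroup R. Proof. exact: sect_congr_subgroup. Qed.
Let R_pairWl x : R (pairW x one) <-> U x. Proof. exact: sect_congr_pairWl. Qed.
Let R_sigma_pow e : R (sigma_pow e). Proof. exact: sect_congr_sigma_pow. Qed.
Let R_diag s : S s -> R (pairW s s). Proof. exact: sect_congr_diag. Qed.

Lemma normR_pairW_swap a b : normalizer R (pairW a b) -> normalizer R (pairW b a).
Proof.
move=> nRab; have nRsigma := normG sgR (R_sigma_pow true).
by rewrite -conj_sigma_pairW; apply: normM => //; apply: normM => //; apply: normV.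
Qed.

Lemma normR_pairW_conj a b : normalizer R (pairW a b) ->
  (forall x, U x -> U (conj x a)) /\ (forall x, S x -> S (conj x a)).
Proof.
move=> nRab; split=> x Hx.
  move/R_pairWl/(normJ nRab): Hx.
  by rewrite conj_pairW conj1g => /R_pairWl.
move/R_diag/(normJ nRab): Hx.
by rewrite conj_pairW => /sect_congr_pairW [].
Qed.

Lemma normR_pairW_T a b : normalizer R (pairW a b) -> T a.
Proof.
move=> nRab; have [Ua Sa] := normR_pairW_conj nRab.
have /normR_pairW_conj [UaV SaV] : normalizer R (pairW (inv a) (inv b)).
  by rewrite -pairW_inv; apply: normV.
by split; apply: normalizer_of_conj.
Qed.

Lemma normR_pairW_Omega a b : normalizer R (pairW a b) -> V (a ** inv b).
Proof.
move=> nRab.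
have [nUa nSa] := normR_pairW_T nRab.
have [nUb nSb] := normR_pairW_T (normR_pairW_swap nRab).
(* sigma^(a,b) = (a^-1 b, b^-1 a) sigma and (s,s)^(a,b) = (s^a, s^b) lie in R. *)
have /(normJ nRab) : R (pairW one one ** sigma_pow true) by rewrite pairW11 mul1g.
rewrite conj_pairW_sigma !mulg1 sect_congrP => -[Sab [_ Uab2]].
have USab s : S s -> U (conj s a ** inv (conj s b)).
  by move/R_diag/(normJ nRab); rewrite conj_pairW => /sect_congr_pairW [_ []].
apply/OmegaP; split.
  have -> : a ** inv b = conj (inv (inv a ** b)) (inv a) by gsimpl.
  by apply: normJV => //; apply: groupV.
split=> [|s Ss].
  have -> : a ** inv b ** (a ** inv b) =
    conj (inv (inv a ** b ** inv (inv b ** a))) (inv a) by gsimpl.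
  by apply: normJV => //; apply: groupV.
have -> : comm s (a ** inv b) =
  inv (conj (conj (inv s) a ** inv (conj (inv s) b)) (inv b)) by gsimpl.
by apply: groupV => //; apply: normJV => //; apply: USab; apply: groupV.
Qed.

Lemma pairW_normR a b : T a -> T b -> V (a ** inv b) ->
  forall r, R r -> R (conj r (pairW a b)).
Proof.
move=> [nUa nSa] [nUb nSb] /OmegaP [Sw [Uww cSw]] r.
rewrite [r]portrait_decomp; set r0 := sect r false; set r1 := sect r true.
move/sect_congrP => [Sr0 [Sr1 Ur]]; case: (r [::]).
  rewrite conj_pairW_sigma sect_congrP; split; [|split].
  - have -> : inv a ** r0 ** b = conj r0 a ** inv (conj (a ** inv b) b) by gsimpl.
    by apply: groupM => //; [apply: normJ | apply: groupV => //; apply: normJ].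
  - have -> : inv b ** r1 ** a = conj r1 b ** conj (a ** inv b) b by gsimpl.
    by apply: groupM => //; apply: normJ.
  have -> : inv a ** r0 ** b ** inv (inv b ** r1 ** a) =
    conj (r0 ** inv r1 ** comm (inv r1) (a ** inv b) **
          inv (a ** inv b ** (a ** inv b))) a by gsimpl.
  apply: normJ => //; apply: groupM => //; last exact: groupV.
  by apply: groupM => //; apply: cSw; apply: groupV.
rewrite -[sigma_pow false]/one mulg1 conj_pairW sect_congr_pairW.
split; [|split]; try exact: normJ.
have -> : conj r0 a ** inv (conj r1 b) =
  conj (conj (comm r0 (a ** inv b)) (inv r0) ** (r0 ** inv r1)) b by gsimpl.
apply: normJ => //; apply: groupM => //.
by apply: normJV; [apply: nUS | apply: cSw].
Qed.

Lemma normalizer_sect_congr : normalizer R = N.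
Proof.
apply: wset_ext => g; split=> [nRg | [Tg0 [Tg1 Vg]]].
  have nRp : normalizer R (pairW (sect g false) (sect g true)).
    rewrite -[pairW _ _]mulg1 -(sigma_powK (g [::])) mulgA -portrait_decomp.
    by apply: normM => //; apply: normG.
  split; [|split].
  - exact: normR_pairW_T nRp.
  - exact: normR_pairW_T (normR_pairW_swap nRp).
  - exact: normR_pairW_Omega nRp.
rewrite [g]portrait_decomp; apply: normM; last exact: normG.
apply: normalizer_of_conj; first exact: pairW_normR.
rewrite pairW_inv; apply: pairW_normR; try exact: (groupV sgT).
have -> : inv (sect g false) ** inv (inv (sect g true)) =
  conj (inv (sect g false ** inv (sect g true))) (sect g false) by gsimpl.
by apply: Omega_conj => //; apply: (groupV sgV).
Qed.

Lemma PS_R : PS U S = R.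
Proof. exact: PS_sect_congr. Qed.

Lemma normalizer_PS : normalizer (PS U S) = PS V T.
Proof.
by rewrite PS_R normalizer_sect_congr PS_sect_congr // => v /Omega_sub_S /S_sub_T.
Qed.

Lemma commg_dprodW_Omega :
  subset (commg (dprodW V V) (PS U S)) (prodset (dprodW U U) (diagW V)).
Proof.
(* The rigid elements of sect_congr V U form a subgroup of (U x U){(v,v) : v in V},
   so it suffices to check the generating commutators. *)
pose Q := setI (sect_congr V U) (fun g => g [::] = false).
have sgQ : subgroup Q.
  apply: subgroupI; first exact: sect_congr_subgroup Omega_subgroup sgU nUV.
  split=> //; split=> [x y x_rigid y_rigid | x x_rigid].
    by rewrite /mul /= x_rigid y_rigid.
  by rewrite /= x_rigid.
have sQ : subset Q (prodset (dprodW U U) (diagW V)).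
  move=> g [[Vg0 [Vg1 Ug]] g_rigid].
  exists (pairW (sect g false ** inv (sect g true)) one), (pairW (sect g true) (sect g true)).
  split.
    by exists (sect g false ** inv (sect g true)), one; split; [|split; first apply: group1].
  split; first by exists (sect g true).
  by rewrite pairW_mul; gsimpl; rewrite {1}[g]portrait_decomp g_rigid mulg1.
move=> g /(gen_subset sgQ) Qg; apply/sQ/Qg => _ [_ [r [[v [v' [Vv [Vv' ->]]]] [Rr ->]]]].
move: Rr; rewrite PS_R [r]portrait_decomp; set r0 := sect r false; set r1 := sect r true.
case: (r [::]) => /sect_congrP [Sr0 [Sr1 Ur]].
  rewrite comm_pairW_sigma; split=> //; apply/sect_congr_pairW; split; [|split].
  - by apply: (groupM sgV); [apply: (groupV sgV) | apply: Omega_conj => //; apply: S_sub_T].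
  - by apply: (groupM sgV); [apply: (groupV sgV) | apply: Omega_conj => //; apply: S_sub_T].
  have Vvv' : V (inv v ** v') by apply: (groupM sgV) => //; apply: (groupV sgV).
  have -> : inv v ** conj v' r1 ** inv (inv v' ** conj v r0) =
    conj (comm v' r1 ** inv (comm v r0)) (inv (inv v ** v')) **
    (inv v ** v' ** (inv v ** v')).
    by gsimpl.
  apply: groupM => //; last by have [_ []] := iffLR (OmegaP _) Vvv'.
  apply: normJV; first exact: nUV.
  by apply: groupM => //; [apply: comm_Omega_S | apply: groupV => //; apply: comm_Omega_S].
rewrite -[sigma_pow false]/one mulg1 comm_pairW.
split=> //; apply/sect_congr_pairW; split; [|split].
- by apply: U_sub_Omega; apply: comm_Omega_S.
- by apply: U_sub_Omega; apply: comm_Omega_S.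
by apply: groupM => //; [apply: comm_Omega_S | apply: groupV => //; apply: comm_Omega_S].
Qed.

Local Notation A := (sect_congr S V).
Local Notation B := (sect_congr T U).

Let A_pairWl x : A (pairW x one) <-> V x.
Proof. exact: (sect_congr_pairWl sgS Omega_sub_S). Qed.

Lemma subgroup_A : subgroup A.
Proof. by apply: sect_congr_subgroup => // s /S_sub_T; apply: nVT. Qed.

Lemma subgroup_B : subgroup B.
Proof. by apply: sect_congr_subgroup => // t []. Qed.

Lemma subset_R_A : subset R A.
Proof. exact: sect_congrS U_sub_Omega. Qed.

Lemma subset_A_N : subset A N.
Proof. exact: sect_congrS S_sub_T _. Qed.

Lemma subset_R_B : subset R B.
Proof. exact: sect_congrS S_sub_T _. Qed.

Lemma subset_B_N : subset B N.
Proof. exact: sect_congrS U_sub_Omega. Qed.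

Lemma prodset_A_B : seteq (prodset A B) N.
Proof.
have sgN : subgroup N by apply: sect_congr_subgroup.
move=> g; split=> [[a [b [Aa [Bb ->]]]] | [Tg0 [Tg1 Vg]]].
  by apply: (groupM sgN); [apply: subset_A_N | apply: subset_B_N].
rewrite [g]portrait_decomp pairW_decompl.
exists (pairW (sect g false ** inv (sect g true)) one),
  (pairW (sect g true) (sect g true) ** sigma_pow (g [::])).
split; first exact/A_pairWl.
by split=> //; apply/sect_congrP; rewrite mulgV; split; [|split; last apply: group1].
Qed.

Lemma normal_R_A : normal R A.
Proof.
split=> //; split; first exact: subgroup_A.
split; first exact: subset_R_A.
by rewrite normalizer_sect_congr; apply: subset_A_N.
Qed.

Lemma normal_R_B : normal R B.
Proof.
split=> //; split; first exact: subgroup_B.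
split; first exact: subset_R_B.
by rewrite normalizer_sect_congr; apply: subset_B_N.
Qed.

Lemma quot_iso_Omega_A : quot_iso V U A R.
Proof.
apply: (@quot_iso_of_morph _ _ _ _ (fun x => pairW x one)).
- exact: U_normal_Omega.
- exact: normal_R_A.
- by move=> x /A_pairWl.
- by move=> x y; rewrite pairW_mul mulg1.
- by move=> x _; apply: R_pairWl.
move=> y [Sy0 [Sy1 Vy]].
exists (sect y false ** inv (sect y true)),
  (pairW (sect y true) (sect y true) ** sigma_pow (y [::])).
split=> //; split; last by rewrite {1}[y]portrait_decomp pairW_decompl.
by apply/sect_congrP; rewrite mulgV; split; [|split; last apply: group1].
Qed.

Lemma quot_iso_T_B : quot_iso T S B R.
Proof.
apply: (@quot_iso_of_morph _ _ _ _ (fun x => pairW x x)).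
- exact: S_normal_T.
- exact: normal_R_B.
- by move=> x Tx; apply: sect_congr_diag.
- by move=> x y; rewrite pairW_mul.
- by move=> x _; split=> [/sect_congr_pairW [] | /R_diag].
move=> y [Ty0 [Ty1 Uy]].
have Uy' : U (inv (sect y true) ** sect y false).
  have -> : inv (sect y true) ** sect y false =
    conj (sect y false ** inv (sect y true)) (sect y true) by gsimpl.
  by apply: normJ => //; case: Ty1.
exists (sect y true),
  (pairW (inv (sect y true) ** sect y false) one ** sigma_pow (y [::])).
split=> //; split; last by rewrite {1}[y]portrait_decomp pairW_decompd.
by apply/sect_congrP; rewrite invg1 mulg1; split; [apply: sUS | split; first apply: group1].
Qed.

End NormalizerR.

Theorem theorem4p4 (U S : wset) (hUS : normal U S) :
  let R := prodset (prodset (dprodW U U) sigma_grp) (diagW S) in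
  let V := Omega S U in
  let T := setI (normalizer U) (normalizer S) in
  let N := normalizer R in
  seteq N (prodset (prodset (dprodW V V) sigma_grp) (diagW T)) /\
  normal V T /\
  subset (commg (dprodW V V) R) (prodset (dprodW U U) (diagW V)) /\
  quot_module V U T S /\
  (exists A B : wset,
      subgroup A /\ subgroup B /\
      subset R A /\ subset A N /\ subset R B /\ subset B N /\
      seteq (prodset A B) N /\
      quot_iso V U A R /\ quot_iso T S B R).
Proof.
move=> R V T N; rewrite {}/N {}/R {}/V {}/T.
split; first by rewrite normalizer_PS.
split; first exact: Omega_normal_T.
split; first exact: commg_dprodW_Omega.
split; first exact: Omega_quot_module.
exists (sect_congr S (Omega S U)), (sect_congr (setI (normalizer U) (normalizer S)) U).
rewrite PS_R // normalizer_sect_congr //.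
split; first exact: subgroup_A.
split; first exact: subgroup_B.
split; first exact: subset_R_A.
split; first exact: subset_A_N.
split; first exact: subset_R_B.
split; first exact: subset_B_N.
split; first exact: prodset_A_B.
split; [exact: quot_iso_Omega_A | exact: quot_iso_T_B].
Qed.
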